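(* Let $(P,A,\lambda)$ be a marked poset and $(U_1,U_2)$ an admissible decomposition of it. Then for every $N\in\mathbb{N}$, $S_{U_1,U_2}(N\lambda)$ equals the $N$-fold Minkowski sum $S_{U_1,U_2}(\lambda)+\cdots+S_{U_1,U_2}(\lambda)$.
   Context: A marked poset is a triple $(P,A,\lambda)$ where $(P,\prec)$ is a finite poset, $A\subseteq P$ contains all minimal and all maximal elements of $P$, and $\lambda:A\to\mathbb{Z}_{\ge 0}$, $a\mapsto\lambda_a$. A decomposition of $(P,A,\lambda)$ is a pair $(U_1,U_2)$ of disjoint sets with $U_1\cup U_2=P\setminus A$; it is admissible if there are no $u_1\in U_1$, $u_2\in U_2$ with $u_1\prec u_2$. Put $A_1=A\cup U_1$. The marked chain-order polytope $\mathcal{CO}_{U_1,U_2}(\lambda)\subset\mathbb{R}^{P\setminus A}$ is the set of $(x_p)_{p\in P\setminus A}$ such that: (i) $x_p\le\lambda_a$ whenever $p\in U_1$, $a\in A$, $p\prec a$; (ii) $\lambda_b\le x_q$ whenever $q\in U_1$, $b\in A$, $b\prec q$; (iii) $x_p\le x_q$ whenever $p,q\in U_1$, $p\prec q$; (iv) $x_p\ge0$ for $p\in U_2$; (v) for every chain $b\prec p_n\prec\cdots\prec p_1\prec a$ with $n\ge1$, $a,b\in A_1$, $p_i\in U_2$: $x_{p_1}+\cdots+x_{p_n}\le\lambda_a-\lambda_b$, where $\lambda_q$ means $x_q$ for $q\in U_1$; (vi) for every chain $p_1\prec\cdots\prec p_s\prec q$ with $q\in U_1$, $p_i\in U_2$: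 $x_{p_1}+\cdots+x_{p_s}\le x_q$. Set $S_{U_1,U_2}(\lambda)=\mathcal{CO}_{U_1,U_2}(\lambda)\cap\mathbb{Z}_{\ge0}^{P\setminus A}$; $N\lambda$ is the marking $a\mapsto N\lambda_a$. *)

From HB Require Import structures.
From mathcomp Require Import all_boot all_order all_algebra.
Set Implicit Arguments. Unset Strict Implicit. Unset Printing Implicit Defensive.
Import Order.TTheory GRing.Theory Num.Theory.
Local Open Scope ring_scope.

(* Points of R^{P\A}
   are represented by functions x : P -> R whose values on A are ignored
   by CO and required to be 0 in S (so that Minkowski sums make sense). *)

Section MarkedPoset.
Context {d : Order.disp_t} {P : finPOrderType d}.

(* (P, A, lam) is a marked poset: A contains all minimal and maximal elements.
   Only the values of lam on A are relevant. *)
Definition marked_poset (A : {set P}) : Prop :=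
  (forall p : P, (forall q : P, ~~ (q < p)%O) -> p \in A) /\
  (forall p : P, (forall q : P, ~~ (p < q)%O) -> p \in A).

Definition decomposition (A U1 U2 : {set P}) : Prop :=
  [disjoint U1 & U2] /\ U1 :|: U2 = ~: A.

Definition admissible (A U1 U2 : {set P}) : Prop :=
  decomposition A U1 U2 /\
  ~ (exists u1 u2, [/\ u1 \in U1, u2 \in U2 & (u1 < u2)%O]).

Definition scale_marking (N : nat) (lam : P -> nat) : P -> nat :=
  fun a => (N * lam a)%N.

Variable R : numDomainType.

Definition lamx (A : {set P}) (lam : P -> nat) (x : P -> R) (q : P) : R :=
  if q \in A then (lam q)%:R else x q.

Definition in_CO (A U1 U2 : {set P}) (lam : P -> nat) (x : P -> R) : Prop :=
  (forall p a, p \in U1 -> a \in A -> (p < a)%O -> x p <= (lam a)%:R) /\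
  (forall q b, q \in U1 -> b \in A -> (b < q)%O -> (lam b)%:R <= x q) /\
  (forall p q, p \in U1 -> q \in U1 -> (p < q)%O -> x p <= x q) /\
  (forall p, p \in U2 -> 0 <= x p) /\
  (* (v): chains b < p_n < ... < p_1 < a, n >= 1, s = [:: p_n; ...; p_1] *)
  (forall (a b : P) (s : seq P),
      a \in A :|: U1 -> b \in A :|: U1 -> s != [::] ->
      all (fun p => p \in U2) s ->
      path (fun u v => (u < v)%O) b (rcons s a) ->
      \sum_(p <- s) x p <= lamx A lam x a - lamx A lam x b) /\
  (forall (q : P) (s : seq P),
      q \in U1 -> s != [::] ->
      all (fun p => p \in U2) s ->
      sorted (fun u v => (u < v)%O) (rcons s q) ->
      \sum_(p <- s) x p <= x q).

End MarkedPoset.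

Definition S_lat {d : Order.disp_t} {P : finPOrderType d}
    (A U1 U2 : {set P}) (lam : P -> nat) (x : {ffun P -> int}) : Prop :=
  (forall a, a \in A -> x a = 0) /\
  (forall p, p \notin A -> 0 <= x p) /\
  in_CO A U1 U2 lam (fun p => x p).

Fixpoint minkowski_pow {V : zmodType} (S : V -> Prop) (N : nat) : V -> Prop :=
  match N with
  | 0 => fun x => x = 0
  | N'.+1 => fun x => exists y z, [/\ minkowski_pow S N' y, S z & x = y + z]
  end.

From HB Require Import structures.
From mathcomp Require Import all_boot all_order all_algebra zify.
Set Implicit Arguments. Unset Strict Implicit. Unset Printing Implicit Defensive.
Import Order.TTheory GRing.Theory Num.Theory.

(* A lattice point x of S(N lam) is sent into the marked order polytope:
   coordinates in U1 are kept, and a coordinate p in U2 becomes the interval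
   [g p, g p + x p], where the potential g p is the largest value of
   lam_b + x p_1 + ... + x p_k over chains b < p_1 < ... < p_k < p with b in A
   and every p_i in U2.  Applying a monotone f : nat -> nat to these order
   coordinates and taking differences again on U2 gives a lattice point of
   S(mu) whenever f (N lam_a) = mu_a, because the differences telescope along
   chains of U2.  The two monotone maps t / N and t - t / N, which add up to
   the identity, split x into a point of S(lam) and one of S((N-1) lam). *)

Section StrictOrder.
Variables (T : finType) (r : rel T).
Hypotheses (r_trans : transitive r) (r_irr : irreflexive r).

Lemma card_rel_lt (p q : T) :
  r q p -> #|[set u | r u q]| < #|[set u | r u p]|.
Proof.
move=> qp; apply: proper_card; apply/properP; split.
  by apply/subsetP => u; rewrite !inE => uq; apply: r_trans uq qp.
by exists q; rewrite !inE ?r_irr.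
Qed.

Lemma exists_minimal (p : T) :
  exists2 a, (a == p) || r a p & forall q, ~~ r q a.
Proof.
have p_below : (p == p) || r p p by rewrite eqxx.
have [a ap a_min] := @arg_minnP _ p [pred a | (a == p) || r a p]
  (fun a => #|[set u | r u a]|) p_below.
exists a => // q; apply/negP => qa; have := card_rel_lt qa.
rewrite ltnNge a_min //=; case/orP: ap => [/eqP <-|ap]; first by rewrite qa orbT.
by rewrite (r_trans qa ap) orbT.
Qed.

End StrictOrder.

Lemma homo_subn_divn (k : nat) : {homo (fun t => t - t %/ k) : m n / m <= n}.
Proof.
apply: homo_leq => [//|y x z|t]; first exact: leq_trans.
have [->|k_gt0] := posnP k; first by rewrite !divn0 !subn0.
have : t.+1 %/ k <= (t + k) %/ k by apply: leq_div2r; lia.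
rewrite divnDr ?dvdnn // divnn k_gt0.
have := leq_div t k; have := leq_div t.+1 k; lia.
Qed.

Section MarkedChainOrder.
Context {d : Order.disp_t} {P : finPOrderType d}.
Variables (A U1 U2 : {set P}).

Lemma S_lat_add (lam1 lam2 mu : P -> nat) (y z : {ffun P -> int}) :
  (forall a, mu a = lam1 a + lam2 a) ->
  S_lat A U1 U2 lam1 y -> S_lat A U1 U2 lam2 z -> S_lat A U1 U2 mu (y + z)%R.
Proof.
move=> mu_def [yA [y_ge0 [yi [yii [yiii [yiv [yv yvi]]]]]]].
move=> [zA [z_ge0 [zi [zii [ziii [ziv [zv zvi]]]]]]].
have E p : (y + z)%R p = (y p + z p)%R by rewrite ffunE.
have lamxD a : lamx A mu (fun p => (y + z)%R p) a =
    (lamx A lam1 (fun p => y p) a + lamx A lam2 (fun p => z p) a)%R.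
  by rewrite /lamx; case: ifP => _; [rewrite mu_def natrD | exact: E].
have sumD s : (\sum_(p <- s) (y + z)%R p = \sum_(p <- s) y p + \sum_(p <- s) z p)%R.
  by rewrite -big_split; apply: eq_bigr => p _; exact: E.
split; [|split].
- by move=> a aA; rewrite E yA ?zA // addr0.
- by move=> p hp; rewrite E; apply: addr_ge0; auto.
split; [|split; [|split; [|split; [|split]]]].
- by move=> p a hp aA pa; rewrite E mu_def natrD; apply: lerD; auto.
- by move=> p a hp aA pa; rewrite E mu_def natrD; apply: lerD; auto.
- by move=> p q hp hq pq; rewrite !E; apply: lerD; auto.
- by move=> p hp; rewrite E; apply: addr_ge0; auto.
- move=> a b s ha hb hs hall hpath; rewrite sumD !lamxD opprD addrACA.
  by apply: lerD; auto.
- by move=> q s hq hs hall hsort; rewrite sumD E; apply: lerD; auto.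
Qed.

Lemma S_lat0 : S_lat A U1 U2 (fun=> 0%N) 0%R.
Proof.
have E p : (0%R : {ffun P -> int}) p = 0%R by rewrite ffunE.
have sum0 s : (\sum_(p <- s) (0%R : {ffun P -> int}) p = 0)%R.
  by rewrite big1 // => p _; exact: E.
split; [by move=> *; rewrite E | split; [by move=> *; rewrite E |]].
split; [|split; [|split; [|split; [|split]]]] => *; rewrite ?E ?sum0 //.
by rewrite /lamx !E; case: ifP; case: ifP.
Qed.

Hypotheses (markedA : marked_poset A) (admissibleU : admissible A U1 U2).

Lemma exists_A_below (p : P) : p \notin A -> exists2 b, b \in A & (b < p)%O.
Proof.
move=> pA; have [b bp b_min] := exists_minimal (@lt_trans _ P) (@ltxx _ P) p.
have bA : b \in A := markedA.1 b b_min.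
exists b => //; case/orP: bp => [/eqP bp|//].
by rewrite -bp bA in pA.
Qed.

Lemma exists_A_above (p : P) : p \notin A -> exists2 a, a \in A & (p < a)%O.
Proof.
move=> pA.
have gt_trans : transitive (fun u v : P => (v < u)%O).
  by move=> v u w uv vw; exact: lt_trans vw uv.
have [a ap a_max] := exists_minimal gt_trans (@ltxx _ P) p.
have aA : a \in A := markedA.2 a a_max.
exists a => //; case/orP: ap => [/eqP ap|//].
by rewrite -ap aA in pA.
Qed.

Lemma U1_notA p : p \in U1 -> p \notin A.
Proof.
case: admissibleU => [[_ UA] _] hp; have : p \in U1 :|: U2 by rewrite inE hp.
by rewrite UA inE.
Qed.

Lemma U2_notA p : p \in U2 -> p \notin A.
Proof.
case: admissibleU => [[_ UA] _] hp; have : p \in U1 :|: U2 by rewrite inE hp orbT.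
by rewrite UA inE.
Qed.

Lemma U2_notU1 p : p \in U2 -> p \notin U1.
Proof.
case: admissibleU => [[U12 _] _] hp; apply/negP => h1.
by have := disjointFr U12 h1; rewrite hp.
Qed.

Lemma notA_U1U2 p : p \notin A -> p \in U1 \/ p \in U2.
Proof.
case: admissibleU => [[_ UA] _] hp; have : p \in ~: A by rewrite inE.
by rewrite -UA inE => /orP.
Qed.

Lemma U1_nlt_U2 u v : u \in U1 -> v \in U2 -> ~~ (u < v)%O.
Proof.
case: admissibleU => _ no_lt hu hv; apply/negP => uv.
by apply: no_lt; exists u, v.
Qed.

Section Transfer.
Variables (nu : P -> nat) (x : {ffun P -> int}).
Hypothesis x_S : S_lat A U1 U2 nu x.

Definition xn p := `|x p|%N.

Definition lamn a := if a \in A then nu a else xn a.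

Lemma x_nat p : p \notin A -> x p = Posz (xn p).
Proof. by move=> pA; rewrite /xn gez0_abs //; exact: x_S.2.1. Qed.

Lemma lamx_nat a : a \in A :|: U1 -> lamx A nu (fun p => x p) a = Posz (lamn a).
Proof.
rewrite /lamx /lamn inE; case: ifP => aA /=; first by rewrite natz.
by move=> _; rewrite x_nat ?aA.
Qed.

Lemma sum_x_nat s : all (mem U2) s ->
  (\sum_(p <- s) x p)%R = Posz (\sum_(p <- s) xn p).
Proof.
elim: s => [|p s IH] /=; first by rewrite !big_nil.
by case/andP=> hp hs; rewrite !big_cons IH // x_nat ?U2_notA // PoszD.
Qed.

Lemma chain_bound a b s : a \in A :|: U1 -> b \in A -> s != [::] ->
  all (mem U2) s -> path <%O b (rcons s a) ->
  nu b + \sum_(p <- s) xn p <= lamn a.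
Proof.
move=> ha hb hs hall hpath.
have hb' : b \in A :|: U1 by rewrite inE hb.
have := x_S.2.2.2.2.2.2.1 a b s ha hb' hs hall hpath.
by rewrite sum_x_nat // !lamx_nat // {2}/lamn hb lerBrDr -PoszD lez_nat addnC.
Qed.

Lemma U2_chain_bound p s a : p \in U2 -> a \in A :|: U1 -> all (mem U2) s ->
  path <%O p (rcons s a) -> xn p + \sum_(q <- s) xn q <= lamn a.
Proof.
move=> hp ha hs hpath; have [b bA bp] := exists_A_below (U2_notA hp).
have := chain_bound ha bA (isT : p :: s != [::]).
by rewrite big_cons /= hp hs bp hpath => /(_ isT isT); lia.
Qed.

Lemma xn_le_marking p a : p \notin A -> a \in A -> (p < a)%O -> xn p <= nu a.
Proof.
move=> pA aA pa; have ha : a \in A :|: U1 by rewrite inE aA.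
case: (notA_U1U2 pA) => hp.
  by have := x_S.2.2.1 p a hp aA pa; rewrite x_nat // natz lez_nat.
have := @U2_chain_bound p [::] a hp ha isT.
by rewrite /= pa big_nil addn0 /lamn aA => /(_ isT).
Qed.

Definition potential_step (g : P -> nat) (p : P) : nat :=
  \max_(q | (q < p)%O) (if q \in A then nu q else if q \in U2 then g q + xn q else 0).

Definition potential := iter #|P| potential_step (fun=> 0%N).

Lemma le_potential_step g p q : (q < p)%O ->
  (if q \in A then nu q else if q \in U2 then g q + xn q else 0) <=
  potential_step g p.
Proof. by move=> qp; rewrite /potential_step (bigD1 q) //= leq_maxl. Qed.

Lemma iter_potential_step_le n p s a : p \in U2 -> a \in A :|: U1 ->
  all (mem U2) s -> path <%O p (rcons s a) ->
  iter n potential_step (fun=> 0%N) p + (xn p + \sum_(q <- s) xn q) <= lamn a.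
Proof.
elim: n p s => [|n IH] p s hp ha hs hpath; first exact: U2_chain_bound.
have chain_ps : all (mem U2) (p :: s) by rewrite /= hp.
have chain_le := U2_chain_bound hp ha hs hpath.
rewrite iterS [potential_step _ p]/potential_step addnC -leq_subRL //.
apply/bigmax_leqP => q qp; rewrite leq_subRL //.
case: ifP => qA.
  have := chain_bound ha qA (isT : p :: s != [::]) chain_ps.
  by rewrite big_cons /= qp hpath => /(_ isT); lia.
case: ifP => qU2; last by rewrite addn0.
have := IH q (p :: s) qU2 ha chain_ps.
by rewrite big_cons /= qp hpath => /(_ isT); lia.
Qed.

Lemma iter_potential_step_stable n p : #|[set q | (q < p)%O]| < n ->
  iter n.+1 potential_step (fun=> 0%N) p = iter n potential_step (fun=> 0%N) p.
Proof.
elim: n p => [//|n IH] p hp; rewrite [in LHS]iterS [in RHS]iterS.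
apply: eq_bigr => q qp; rewrite IH //.
exact: leq_trans (card_rel_lt (@lt_trans _ P) (@ltxx _ P) qp) _.
Qed.

Lemma potential_fixpoint p : potential_step potential p = potential p.
Proof.
rewrite -iterS iter_potential_step_stable // -cardsT.
apply: proper_card; apply/properP; split; first exact: subsetT.
by exists p; rewrite !inE ?ltxx.
Qed.

Lemma potential_ge_A p q : q \in A -> (q < p)%O -> nu q <= potential p.
Proof.
move=> qA qp; rewrite -potential_fixpoint.
by have := le_potential_step potential qp; rewrite qA.
Qed.

Lemma potential_ge_U2 p q : q \in U2 -> (q < p)%O ->
  potential q + xn q <= potential p.
Proof.
move=> qU qp; rewrite -[potential p]potential_fixpoint.
by have := le_potential_step potential qp; rewrite (negbTE (U2_notA qU)) qU.
Qed.

Lemma potential_le p a : p \in U2 -> a \in A :|: U1 -> (p < a)%O ->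
  potential p + xn p <= lamn a.
Proof.
move=> hp ha pa; have := @iter_potential_step_le #|P| p [::] a hp ha isT.
by rewrite /= pa big_nil addn0 => /(_ isT).
Qed.

Section Map.
Variable f : nat -> nat.

Definition transfer_nat p :=
  if p \in A then 0 else if p \in U1 then f (xn p)
  else f (potential p + xn p) - f (potential p).

Definition transfer : {ffun P -> int} := [ffun p => Posz (transfer_nat p)].

Lemma transfer_U1 p : p \in U1 -> transfer_nat p = f (xn p).
Proof. by move=> hp; rewrite /transfer_nat (negbTE (U1_notA hp)) hp. Qed.

Lemma transfer_U2 p : p \in U2 ->
  transfer_nat p = f (potential p + xn p) - f (potential p).
Proof.
by move=> hp; rewrite /transfer_nat (negbTE (U2_notA hp)) (negbTE (U2_notU1 hp)).
Qed.

Hypothesis f_homo : {homo f : m n / m <= n}.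

Lemma transfer_telescope p s : p \in U2 -> all (mem U2) s -> path <%O p s ->
  f (potential p) + (transfer_nat p + \sum_(q <- s) transfer_nat q) <=
  f (potential (last p s) + xn (last p s)).
Proof.
elim: s p => [|q s IH] p hp /=.
  by move=> _ _; rewrite big_nil addn0 transfer_U2 // subnKC // f_homo ?leq_addr.
case/andP=> hq hs /andP[pq hpath].
rewrite big_cons (transfer_U2 hp) addnA subnKC ?f_homo ?leq_addr //.
apply: leq_trans (IH q hq hs hpath); rewrite leq_add2r.
exact/f_homo/potential_ge_U2.
Qed.

Variable mu : P -> nat.
Hypothesis f_nu : forall a, f (nu a) = mu a.

Lemma transfer_chain a p s : a \in A :|: U1 -> p \in U2 -> all (mem U2) s ->
  path <%O p (rcons s a) ->
  f (potential p) + \sum_(q <- p :: s) transfer_nat q <=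
  (if a \in A then mu a else transfer_nat a).
Proof.
move=> ha hp hs; rewrite rcons_path big_cons => /andP[hpath la].
have hps : all (mem U2) (p :: s) by rewrite /= hp.
set l := last p s; have hl : l \in U2 := allP hps _ (mem_last p s).
apply: leq_trans (transfer_telescope hp hs hpath) _.
have := potential_le hl ha la; rewrite /lamn; case: ifP => aA le_a.
  by rewrite -f_nu f_homo.
by rewrite transfer_U1 ?f_homo //; move: ha; rewrite inE aA.
Qed.

Lemma transfer_S : S_lat A U1 U2 mu transfer.
Proof.
have E p : transfer p = Posz (transfer_nat p) by rewrite ffunE.
have sumE s : (\sum_(p <- s) transfer p)%R = Posz (\sum_(p <- s) transfer_nat p).
  rewrite (big_morph Posz PoszD (erefl (Posz 0))).
  by apply: eq_bigr => p _; rewrite E.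
have lamxE a : lamx A mu (fun p => transfer p) a =
    Posz (if a \in A then mu a else transfer_nat a).
  by rewrite /lamx E; case: ifP => _ //; rewrite natz.
have U1_homo p q : p \in U1 -> xn p <= q -> transfer_nat p <= f q.
  by move=> hp pq; rewrite transfer_U1 // f_homo.
have x_U1 p : p \in U1 -> x p = Posz (xn p) by move/U1_notA/x_nat.
case: x_S => _ [_ [_ [xii [xiii _]]]].
split; [|split].
- by move=> a aA; rewrite E /transfer_nat aA.
- by move=> p _; rewrite E.
split; [|split; [|split; [|split; [|split]]]].
- move=> p a hp aA pa; rewrite E natz lez_nat -f_nu.
  exact/U1_homo/xn_le_marking/pa/aA/U1_notA.
- move=> q b hq bA bq; rewrite E natz lez_nat transfer_U1 // -f_nu f_homo //.
  by have := xii q b hq bA bq; rewrite x_U1 // natz lez_nat.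
- move=> p q hp hq pq; rewrite !E lez_nat !transfer_U1 // f_homo //.
  by have := xiii p q hp hq pq; rewrite !x_U1 // lez_nat.
- by move=> p _; rewrite E.
- move=> a b [//|p s] ha hb _ /= /andP[hp hs] /andP[bp hpath].
  have bA : b \in A.
    by move: hb; rewrite inE => /orP[//|/U1_nlt_U2/(_ hp)]; rewrite bp.
  rewrite sumE !lamxE bA lerBrDr -PoszD lez_nat.
  apply: leq_trans (transfer_chain ha hp hs hpath); rewrite addnC leq_add2r.
  by rewrite -f_nu f_homo // potential_ge_A.
- move=> q [//|p s] hq _ /= /andP[hp hs] hpath; rewrite sumE E lez_nat.
  have ha : q \in A :|: U1 by rewrite inE hq orbT.
  have := transfer_chain ha hp hs hpath; rewrite (negbTE (U1_notA hq)).
  exact/leq_trans/leq_addl.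
Qed.

End Map.

Lemma transfer_add (f1 f2 : nat -> nat) :
  {homo f1 : m n / m <= n} -> {homo f2 : m n / m <= n} ->
  (forall t, f1 t + f2 t = t) -> x = (transfer f1 + transfer f2)%R.
Proof.
move=> f1_homo f2_homo f12; apply/ffunP => p; rewrite !ffunE.
have [pA|pA] := boolP (p \in A); first by rewrite x_S.1 // /transfer_nat pA.
rewrite x_nat // -PoszD; congr Posz.
case: (notA_U1U2 pA) => hp; first by rewrite !transfer_U1.
rewrite !transfer_U2 //.
have := f1_homo _ _ (leq_addr (xn p) (potential p)).
have := f2_homo _ _ (leq_addr (xn p) (potential p)).
have := f12 (potential p); have := f12 (potential p + xn p); lia.
Qed.

Lemma S_lat_eq0 : (forall a, nu a = 0) -> x = 0%R.
Proof.
move=> nu0; apply/ffunP => p; rewrite ffunE.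
have [pA|pA] := boolP (p \in A); first exact: x_S.1.
have [a aA pa] := exists_A_above pA.
by have := xn_le_marking pA aA pa; rewrite nu0 leqn0 x_nat // => /eqP ->.
Qed.

End Transfer.

Lemma S_lat_scaleS (N : nat) (lam : P -> nat) (x : {ffun P -> int}) :
  S_lat A U1 U2 (scale_marking N.+1 lam) x ->
  exists y z, [/\ S_lat A U1 U2 (scale_marking N lam) y, S_lat A U1 U2 lam z
              & x = (y + z)%R].
Proof.
move=> x_S; pose f1 t := t %/ N.+1; pose f2 t := t - t %/ N.+1.
have f1_homo : {homo f1 : m n / m <= n} by move=> m n; exact: leq_div2r.
have f12 t : f1 t + f2 t = t by rewrite subnKC // leq_div.
set nu := scale_marking N.+1 lam in x_S.
exists (transfer nu x f2), (transfer nu x f1); split.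
- apply: (transfer_S x_S); first exact: homo_subn_divn.
  by move=> a; rewrite /f2 /nu /scale_marking mulKn // mulSn addKn.
- by apply: (transfer_S x_S) => // a; rewrite /f1 /nu /scale_marking mulKn.
- by rewrite addrC; apply: (transfer_add x_S) => //; exact: homo_subn_divn.
Qed.

End MarkedChainOrder.

Theorem theorem2p1 (d : Order.disp_t) (P : finPOrderType d)
    (A U1 U2 : {set P}) (lam : P -> nat) :
  marked_poset A -> admissible A U1 U2 ->
  forall (N : nat) (x : {ffun P -> int}),
    S_lat A U1 U2 (scale_marking N lam) x <->
    minkowski_pow (S_lat A U1 U2 lam) N x.
Proof.
move=> markedA admissibleU N; elim: N => [|N IH] x; split.
- by move/(S_lat_eq0 markedA admissibleU) => -> //.
- by move=> /= ->; exact: S_lat0.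
- case/(S_lat_scaleS markedA admissibleU) => y [z [y_S z_S ->]].
  by exists y, z; split => //; apply/IH.
- case=> y [z [/IH y_S z_S ->]]; apply: S_lat_add y_S z_S.
  by move=> a; rewrite /scale_marking mulSn addnC.
Qed.
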